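(* Let $J_1,J_2\in\mathbb{R}$, $\beta>0$, $a=e^{J_1\beta}$, $b=e^{J_2\beta}$, and let $F$ and $M_1$ be as below. 1) If $J_2>0$, then for every integer $p\ge2$ the equation $F^p(u)=u$ has no solution $u\in M_1\setminus \mathrm{Fix}(F)$. 2) If $J_2<0$, then for every integer $p\ge3$ the equation $F^p(u)=u$ has no solution $u\in M_1\setminus(\mathrm{Fix}(F)\cup\mathrm{Per}_2(F))$.
   Context: $F:\mathbb{R}^4_+\to\mathbb{R}^4_+$ (positive coordinates) is $F(u)=(u_1',u_2',u_3',u_4')$ with $u_1'=a(bu_1+b^{-1}u_2)^2$, $u_2'=a^{-1}(bu_3+b^{-1}u_4)^2$, $u_3'=a^{-1}(b^{-1}u_1+bu_2)^2$, $u_4'=a(b^{-1}u_3+bu_4)^2$. $M_1=\{u\in\mathbb{R}^4_+:\ u_1=u_4,\ u_2=u_3\}$. $F^p$ is the $p$-th iterate, $\mathrm{Fix}(F)=\{u:F(u)=u\}$, and $\mathrm{Per}_2(F)$ is the set of points of prime (least) period $2$ of $F$. *)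

From Stdlib Require Import Reals.
Open Scope R_scope.

Record R4 : Type := mkR4 { c1 : R; c2 : R; c3 : R; c4 : R }.

Definition pos4 (u : R4) : Prop := 0 < c1 u /\ 0 < c2 u /\ 0 < c3 u /\ 0 < c4 u.

Definition F (a b : R) (u : R4) : R4 :=
  mkR4 (a * (b * c1 u + / b * c2 u) ^ 2)
       (/ a * (b * c3 u + / b * c4 u) ^ 2)
       (/ a * (/ b * c1 u + b * c2 u) ^ 2)
       (a * (/ b * c3 u + b * c4 u) ^ 2).

Fixpoint Fiter (a b : R) (p : nat) (u : R4) : R4 :=
  match p with
  | O => u
  | S q => F a b (Fiter a b q u)
  end.

Definition M1 (u : R4) : Prop := pos4 u /\ c1 u = c4 u /\ c2 u = c3 u.

Definition isFix (a b : R) (u : R4) : Prop := F a b u = u.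

Definition isPer2 (a b : R) (u : R4) : Prop :=
  Fiter a b 2 u = u /\ F a b u <> u.

From Stdlib Require Import Reals Lra Lia Psatz.
Open Scope R_scope.

(* On M1 a point is (x, y, y, x), and F acts on it through the ratio r = x/y, which evolves
   by r |-> a^2 ((b^2 r + 1) / (r + b^2))^2 (a Moebius map squared: increasing for b > 1,
   decreasing for b < 1), and through the scale of (x, y), since F is homogeneous of degree 2.
   Ordering M1 lexicographically by (r, x), F is therefore strictly increasing when b > 1 and
   F o F is when b < 1.  A periodic orbit of a strictly increasing self-map of a totally
   ordered set is stationary, so periodic points in M1 are fixed points of F, resp. of F o F. *)

Section IncreasingOrbits.
Variables (T : Type) (lt : T -> T -> Prop) (P : T -> Prop) (f : T -> T) (s : nat -> T).
Hypothesis lt_trans : forall x y z, lt x y -> lt y z -> lt x z.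
Hypothesis f_increasing : forall x y, P x -> P y -> lt x y -> lt (f x) (f y).
Hypothesis orbit_P : forall n, P (s n).
Hypothesis orbit_step : forall n, s (S n) = f (s n).

Lemma orbit_stays_below_start : lt (s 1) (s 0) -> forall n, lt (s (S n)) (s 0).
Proof.
  intros H10.
  assert (Hdesc : forall n, lt (s (S n)) (s n)).
  { induction n as [|n IH]; [exact H10|].
    rewrite (orbit_step (S n)) at 1. rewrite (orbit_step n) at 2. now apply f_increasing. }
  induction n as [|n IH]; [exact H10|]. exact (lt_trans _ _ _ (Hdesc (S n)) IH).
Qed.
End IncreasingOrbits.

Lemma increasing_periodic_orbit_stationary (T : Type) (lt : T -> T -> Prop)
    (P : T -> Prop) (f : T -> T) (s : nat -> T) (p : nat) :
  (forall x y z, lt x y -> lt y z -> lt x z) ->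
  (forall x, ~ lt x x) ->
  (forall x y, P x -> P y -> lt x y \/ x = y \/ lt y x) ->
  (forall x y, P x -> P y -> lt x y -> lt (f x) (f y)) ->
  (forall n, P (s n)) -> (forall n, s (S n) = f (s n)) ->
  (1 <= p)%nat -> s p = s 0%nat -> s 1%nat = s 0%nat.
Proof.
  intros Htrans Hirr Htot Hinc HP Hs Hp Hper.
  destruct p as [|q]; [lia|].
  destruct (Htot (s 1%nat) (s 0%nat)) as [H|[H|H]]; auto.
  - exfalso. apply (Hirr (s 0%nat)).
    rewrite <- Hper at 1. exact (orbit_stays_below_start T lt P f s Htrans Hinc HP Hs H q).
  - exfalso. apply (Hirr (s 0%nat)).
    rewrite <- Hper at 2.
    exact (orbit_stays_below_start T (fun x y => lt y x) P f s
             (fun x y z Hxy Hyz => Htrans z y x Hyz Hxy) (fun x y Hx Hy => Hinc y x Hy Hx) HP Hs H q).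
Qed.

Definition ratio (u : R4) : R := c1 u / c2 u.

Definition scale4 (t : R) (u : R4) : R4 :=
  mkR4 (t * c1 u) (t * c2 u) (t * c3 u) (t * c4 u).

Definition lex_lt (u v : R4) : Prop :=
  ratio u < ratio v \/ (ratio u = ratio v /\ c1 u < c1 v).

Lemma lex_lt_trans u v w : lex_lt u v -> lex_lt v w -> lex_lt u w.
Proof. unfold lex_lt; intros [|[]] [|[]]; lra. Qed.

Lemma lex_lt_irrefl u : ~ lex_lt u u.
Proof. unfold lex_lt; lra. Qed.

Lemma scale4_1 u : scale4 1 u = u.
Proof. destruct u; unfold scale4; simpl; f_equal; ring. Qed.

Lemma ratio_scale4 t u : t <> 0 -> c2 u <> 0 -> ratio (scale4 t u) = ratio u.
Proof. intros. unfold ratio, scale4; simpl. field; auto. Qed.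

Lemma ratio_pos u : M1 u -> 0 < ratio u.
Proof. intros [(h1 & h2 & _) _]. unfold ratio. now apply Rdiv_lt_0_compat. Qed.

Lemma M1_ratio_eq_scale4 u v :
  M1 u -> M1 v -> ratio u = ratio v -> v = scale4 (c1 v / c1 u) u.
Proof.
  destruct u as [x y z w], v as [x' y' z' w'].
  unfold M1, pos4, ratio, scale4; simpl.
  intros [(hx & hy & _) [<- <-]] [(_ & hy' & _) [<- <-]] E.
  assert (Hcross : x * y' = x' * y).
  { apply (f_equal (fun t => t * y * y')) in E. field_simplify in E; lra. }
  assert (Hx : x' = x' / x * x) by (field; lra).
  assert (Hy : y' = x' / x * y).
  { apply (Rmult_eq_reg_l x); [|lra]. rewrite Hcross. field. lra. }
  now rewrite <- Hx, <- Hy.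
Qed.

Lemma lex_lt_total_M1 u v : M1 u -> M1 v -> lex_lt u v \/ u = v \/ lex_lt v u.
Proof.
  intros Hu Hv. unfold lex_lt.
  destruct (Rtotal_order (ratio u) (ratio v)) as [Hr|[Hr|Hr]]; [left; now left| |right; right; now left].
  destruct (Rtotal_order (c1 u) (c1 v)) as [Hc|[Hc|Hc]]; [left; now right| |right; right; now right].
  right; left. rewrite (M1_ratio_eq_scale4 u v Hu Hv Hr), <- Hc.
  destruct Hu as [(hx & _) _]. replace (c1 u / c1 u) with 1 by (field; lra).
  now rewrite scale4_1.
Qed.

Definition ratio_map (a c r : R) : R := a ^ 2 * ((c * r + 1) / (r + c)) ^ 2.

Lemma mobius_sub c r s : 0 < c -> 0 < r -> 0 < s ->
  (c * s + 1) / (s + c) - (c * r + 1) / (r + c) = (c ^ 2 - 1) * (s - r) / ((r + c) * (s + c)).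
Proof. intros. field. lra. Qed.

Lemma ratio_map_lt a c r s : 0 < a -> 0 < c -> 0 < r -> r < s ->
  (1 < c -> ratio_map a c r < ratio_map a c s) /\ (c < 1 -> ratio_map a c s < ratio_map a c r).
Proof.
  intros Ha Hc Hr Hrs.
  set (g t := (c * t + 1) / (t + c)).
  assert (Hg : forall t, 0 < t -> 0 < g t).
  { intros t Ht. apply Rdiv_lt_0_compat; nra. }
  assert (Hdiff : g s - g r = (c ^ 2 - 1) * ((s - r) / ((r + c) * (s + c)))).
  { unfold g. rewrite (mobius_sub c r s Hc Hr ltac:(lra)). unfold Rdiv. ring. }
  assert (Hq : 0 < (s - r) / ((r + c) * (s + c))).
  { apply Rdiv_lt_0_compat; nra. }
  assert (Hsq : forall x y, 0 < x -> x < y -> a ^ 2 * x ^ 2 < a ^ 2 * y ^ 2).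
  { intros x y Hx Hxy. apply Rmult_lt_compat_l; [nra|]. simpl; nra. }
  unfold ratio_map; fold (g r) (g s).
  pose proof (Hg r Hr). pose proof (Hg s ltac:(lra)).
  clearbody g.
  split; intro Hc1; apply Hsq; auto.
  - assert (0 < c ^ 2 - 1) by nra. nra.
  - assert (c ^ 2 - 1 < 0) by nra. nra.
Qed.

Lemma F_scale4 a b t u : F a b (scale4 t u) = scale4 (t ^ 2) (F a b u).
Proof. destruct u; unfold F, scale4; simpl; f_equal; ring. Qed.

Section M1Dynamics.
Variables (a b : R).
Hypotheses (Ha : 0 < a) (Hb : 0 < b).

Lemma M1_F u : M1 u -> M1 (F a b u).
Proof.
  destruct u as [x y z w]. unfold M1, pos4, F; cbn [c1 c2 c3 c4].
  intros [(hx & hy & _) [<- <-]].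
  assert (0 < / a) by (apply Rinv_0_lt_compat; lra).
  assert (0 < / b) by (apply Rinv_0_lt_compat; lra).
  repeat split; try ring; apply Rmult_lt_0_compat; auto; apply pow_lt; nra.
Qed.

Lemma M1_Fiter n u : M1 u -> M1 (Fiter a b n u).
Proof. intros Hu. induction n as [|n IH]; simpl; auto using M1_F. Qed.

Lemma ratio_F u : M1 u -> ratio (F a b u) = ratio_map a (b ^ 2) (ratio u).
Proof.
  destruct u as [x y z w]. unfold M1, pos4, ratio, ratio_map, F; cbn [c1 c2 c3 c4].
  intros [(hx & hy & _) [<- <-]].
  assert (0 < b ^ 2) by (apply pow_lt; lra).
  field. repeat split; nra.
Qed.

Lemma F_lex_lt_same_ratio u v : M1 u -> M1 v -> ratio u = ratio v -> c1 u < c1 v ->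
  ratio (F a b u) = ratio (F a b v) /\ c1 (F a b u) < c1 (F a b v).
Proof.
  intros Hu Hv Hr Hc.
  pose proof (M1_ratio_eq_scale4 u v Hu Hv Hr) as Ev.
  destruct (M1_F u Hu) as [(hFx & hFy & _) _].
  destruct Hu as [(hx & _) _].
  set (t := c1 v / c1 u) in Ev.
  assert (Ht : 1 < t) by (unfold t; apply (Rmult_lt_reg_r (c1 u)); [lra|]; field_simplify; lra).
  rewrite Ev, F_scale4, ratio_scale4; [|apply pow_nonzero; lra|lra]. split; auto.
  clearbody t. cbn [c1 scale4]. assert (1 < t ^ 2) by nra. nra.
Qed.

Lemma F_lex_lt_increasing u v : 1 < b -> M1 u -> M1 v -> lex_lt u v -> lex_lt (F a b u) (F a b v).
Proof.
  intros Hb1 Hu Hv [Hr|[Hr Hc]].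
  - left. rewrite !ratio_F by assumption.
    assert (Hb2 : 0 < b ^ 2) by (apply pow_lt; lra).
    exact (proj1 (ratio_map_lt _ _ _ _ Ha Hb2 (ratio_pos u Hu) Hr) ltac:(nra)).
  - right. now apply F_lex_lt_same_ratio.
Qed.

Lemma FF_lex_lt_increasing u v : b < 1 -> M1 u -> M1 v -> lex_lt u v ->
  lex_lt (F a b (F a b u)) (F a b (F a b v)).
Proof.
  intros Hb1 Hu Hv [Hr|[Hr Hc]].
  - assert (Hb2 : 0 < b ^ 2) by (apply pow_lt; lra).
    assert (Hb21 : b ^ 2 < 1) by nra.
    assert (Hr' : ratio (F a b v) < ratio (F a b u)).
    { rewrite !ratio_F by assumption.
      exact (proj2 (ratio_map_lt _ _ _ _ Ha Hb2 (ratio_pos u Hu) Hr) Hb21). }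
    left. rewrite (ratio_F (F a b u)), (ratio_F (F a b v)) by auto using M1_F.
    exact (proj2 (ratio_map_lt _ _ _ _ Ha Hb2 (ratio_pos _ (M1_F v Hv)) Hr') Hb21).
  - right. destruct (F_lex_lt_same_ratio u v) as [Hr' Hc']; auto.
    apply F_lex_lt_same_ratio; auto using M1_F.
Qed.

End M1Dynamics.

Lemma Fiter_add a b m n u : Fiter a b (m + n) u = Fiter a b m (Fiter a b n u).
Proof. induction m as [|m IH]; simpl; congruence. Qed.

Lemma Fiter_periodic_mul a b p k u : Fiter a b p u = u -> Fiter a b (k * p) u = u.
Proof. intros Hp. induction k as [|k IH]; simpl; auto. now rewrite Fiter_add, IH. Qed.

Lemma M1_periodic_fixed a b p u : 0 < a -> 1 < b -> M1 u ->
  (1 <= p)%nat -> Fiter a b p u = u -> F a b u = u.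
Proof.
  intros Ha Hb1 Hu Hp Hper.
  refine (increasing_periodic_orbit_stationary R4 lex_lt M1 (F a b) (fun n => Fiter a b n u) p
            lex_lt_trans lex_lt_irrefl lex_lt_total_M1 _ _ _ Hp Hper).
  - intros v w Hv Hw. apply F_lex_lt_increasing; auto; lra.
  - intros n. apply M1_Fiter; auto; lra.
  - reflexivity.
Qed.

Lemma M1_periodic_period2 a b p u : 0 < a -> 0 < b -> b < 1 -> M1 u ->
  (1 <= p)%nat -> Fiter a b p u = u -> Fiter a b 2 u = u.
Proof.
  intros Ha Hb Hb1 Hu Hp Hper.
  refine (increasing_periodic_orbit_stationary R4 lex_lt M1 (fun v => F a b (F a b v))
            (fun n => Fiter a b (2 * n) u) p
            lex_lt_trans lex_lt_irrefl lex_lt_total_M1 _ _ _ Hp _).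
  - intros v w Hv Hw. now apply FF_lex_lt_increasing.
  - intros n. now apply M1_Fiter.
  - intros n. cbv beta. replace (2 * S n)%nat with (S (S (2 * n))) by lia. reflexivity.
  - exact (Fiter_periodic_mul a b p 2 u Hper).
Qed.

Theorem lemma5 (J1 J2 beta : R) (hbeta : 0 < beta) :
  let a := exp (J1 * beta) in
  let b := exp (J2 * beta) in
  (0 < J2 ->
     forall (p : nat), (2 <= p)%nat ->
     ~ exists u : R4, M1 u /\ ~ isFix a b u /\ Fiter a b p u = u) /\
  (J2 < 0 ->
     forall (p : nat), (3 <= p)%nat ->
     ~ exists u : R4, M1 u /\ ~ isFix a b u /\ ~ isPer2 a b u /\ Fiter a b p u = u).
Proof.
  intros a b.
  assert (Ha : 0 < a) by apply exp_pos.
  assert (Hb : 0 < b) by apply exp_pos.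
  split.
  - intros HJ p Hp [u (Hu & Hfix & Hper)].
    assert (Hb1 : 1 < b) by (rewrite <- exp_0; apply exp_increasing; nra).
    exact (Hfix (M1_periodic_fixed a b p u Ha Hb1 Hu ltac:(lia) Hper)).
  - intros HJ p Hp [u (Hu & Hfix & Hper2 & Hper)].
    assert (Hb1 : b < 1) by (rewrite <- exp_0; apply exp_increasing; nra).
    exact (Hper2 (conj (M1_periodic_period2 a b p u Ha Hb Hb1 Hu ltac:(lia) Hper) Hfix)).
Qed.
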